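(* Suppose a large scale group $G$ acts by uniform coarse equivalences on a large scale space $X$, and the action is proper and cobounded. Then for each $x_0\in X$ the map $G\to X$, $g\mapsto g\cdot x_0$, is a coarse equivalence.
   Context: A large scale space is a set $X$ with a family of covers (uniformly bounded covers) closed under stars $st(\mathcal U,\mathcal V)=\{st(A,\mathcal V):A\in\mathcal U\}$ (where $st(A,\mathcal V)$ is the union of elements of $\mathcal V$ meeting $A$) and under coarsenings-by-refinement (any cover refining a uniformly bounded cover is uniformly bounded); bounded sets are subsets of elements of uniformly bounded covers, and the union of two bounded sets is assumed bounded. A large scale group is a group $G$ with a bornology $\mathcal B$ (a cover closed under subsets and finite unions) closed under inverses and products; its uniformly bounded covers are those refining $\{gB\}_{g\in G}$ for some $B\in\mathcal B$. $G$ acts on $X$ by uniform coarse equivalences if for every uniformly bounded cover $\{U_s\}_{s\in S}$ of $X$ the cover $\{g\cdot U_s\}_{s\in S,g\in G}$ is uniformly bounded. The action is cobounded if $G\cdot B=X$ for some bounded $B\subseteq X$. The action is proper if for every bounded $B\subseteq X$ the set $\{g\in G:(g\cdot B)\cap B\neq\emptyset\}$ is bounded in $G$, and for every bounded $K\subseteq G$ and every $x\in X$ the set $K\cdot x$ is bounded in $X$. A map is a coarse equivalence if it is coarse (preimages of bounded sets bounded) and large scale continuous (images of uniformly bounded covers refine uniformly bounded covers) and has a coarse large scale continuous map in the other direction such that both compositions are close to the identities (maps $f,f'$ into $Y$ are close if $f(x)\in st(f'(x),\mathcal U)$ for all $x$ for some uniformly bounded cover $\mathcal U$ of $Y$). 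*)

Set Implicit Arguments.

Definition subset {X : Type} (A B : X -> Prop) : Prop := forall x, A x -> B x.
Definition set_eq {X : Type} (A B : X -> Prop) : Prop := forall x, A x <-> B x.
Definition setU {X : Type} (A B : X -> Prop) : X -> Prop := fun x => A x \/ B x.

Definition is_cover {X : Type} (U : (X -> Prop) -> Prop) : Prop :=
  forall x, exists A, U A /\ A x.

Definition refines {X : Type} (U V : (X -> Prop) -> Prop) : Prop :=
  forall A, U A -> exists B, V B /\ subset A B.

Definition st_set {X : Type} (A : X -> Prop) (V : (X -> Prop) -> Prop) : X -> Prop :=
  fun x => exists B, V B /\ (exists y, A y /\ B y) /\ B x.

Definition st_cover {X : Type} (U V : (X -> Prop) -> Prop) : (X -> Prop) -> Prop :=
  fun C => exists A, U A /\ set_eq C (st_set A V).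

Definition bounded {X : Type} (ub : ((X -> Prop) -> Prop) -> Prop) (A : X -> Prop) : Prop :=
  exists U, ub U /\ exists C, U C /\ subset A C.

Definition is_large_scale {X : Type} (ub : ((X -> Prop) -> Prop) -> Prop) : Prop :=
  (forall U, ub U -> is_cover U) /\
  (forall U V, ub U -> ub V -> ub (st_cover U V)) /\
  (forall U V, is_cover U -> refines U V -> ub V -> ub U) /\
  (forall A B, bounded ub A -> bounded ub B -> bounded ub (setU A B)).

Definition img {X Y : Type} (f : X -> Y) (A : X -> Prop) : Y -> Prop :=
  fun y => exists a, A a /\ y = f a.
Definition img_fam {X Y : Type} (f : X -> Y) (U : (X -> Prop) -> Prop) : (Y -> Prop) -> Prop :=
  fun C => exists A, U A /\ set_eq C (img f A).

Definition coarse {X Y : Type} (ubX : ((X -> Prop) -> Prop) -> Prop)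
  (ubY : ((Y -> Prop) -> Prop) -> Prop) (f : X -> Y) : Prop :=
  forall B, bounded ubY B -> bounded ubX (fun x => B (f x)).

Definition ls_continuous {X Y : Type} (ubX : ((X -> Prop) -> Prop) -> Prop)
  (ubY : ((Y -> Prop) -> Prop) -> Prop) (f : X -> Y) : Prop :=
  forall U, ubX U -> exists V, ubY V /\ refines (img_fam f U) V.

Definition close {X Y : Type} (ubY : ((Y -> Prop) -> Prop) -> Prop) (f f' : X -> Y) : Prop :=
  exists U, ubY U /\ forall x, st_set (fun y => y = f' x) U (f x).

Definition coarse_equivalence {X Y : Type} (ubX : ((X -> Prop) -> Prop) -> Prop)
  (ubY : ((Y -> Prop) -> Prop) -> Prop) (f : X -> Y) : Prop :=
  coarse ubX ubY f /\ ls_continuous ubX ubY f /\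
  exists g : Y -> X, coarse ubY ubX g /\ ls_continuous ubY ubX g /\
    close ubX (fun x => g (f x)) (fun x => x) /\
    close ubY (fun y => f (g y)) (fun y => y).

Record Group := {
  gcar :> Type;
  gmul : gcar -> gcar -> gcar;
  gone : gcar;
  ginv : gcar -> gcar;
  gmulA : forall a b c, gmul a (gmul b c) = gmul (gmul a b) c;
  gmul1l : forall a, gmul gone a = a;
  gmul1r : forall a, gmul a gone = a;
  gmulVl : forall a, gmul (ginv a) a = gone;
  gmulVr : forall a, gmul a (ginv a) = gone
}.

Section GroupDefs.
Variable G : Group.

Definition set_inv (B : G -> Prop) : G -> Prop := fun h => exists b, B b /\ h = ginv G b.
Definition set_mul (A B : G -> Prop) : G -> Prop :=
  fun h => exists a b, A a /\ B b /\ h = gmul G a b.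
Definition lcoset (g : G) (B : G -> Prop) : G -> Prop :=
  fun h => exists b, B b /\ h = gmul G g b.

Definition is_group_bornology (Bor : (G -> Prop) -> Prop) : Prop :=
  is_cover Bor /\
  (forall A B, Bor B -> subset A B -> Bor A) /\
  (forall A B, Bor A -> Bor B -> Bor (setU A B)) /\
  (forall B, Bor B -> Bor (set_inv B)) /\
  (forall A B, Bor A -> Bor B -> Bor (set_mul A B)).

Definition group_ub (Bor : (G -> Prop) -> Prop) (U : (G -> Prop) -> Prop) : Prop :=
  is_cover U /\ exists B, Bor B /\
    refines U (fun C => exists g, set_eq C (lcoset g B)).

Variable X : Type.

Definition is_action (act : G -> X -> X) : Prop :=
  (forall x, act (gone G) x = x) /\
  (forall g h x, act (gmul G g h) x = act g (act h x)).

Definition acts_by_uniform_coarse_equivalences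
  (ubX : ((X -> Prop) -> Prop) -> Prop) (act : G -> X -> X) : Prop :=
  forall U, ubX U -> ubX (fun C => exists g A, U A /\ set_eq C (img (act g) A)).

Definition cobounded_action (ubX : ((X -> Prop) -> Prop) -> Prop) (act : G -> X -> X) : Prop :=
  exists B, bounded ubX B /\ forall x, exists g b, B b /\ x = act g b.

Definition proper_action (Bor : (G -> Prop) -> Prop)
  (ubX : ((X -> Prop) -> Prop) -> Prop) (act : G -> X -> X) : Prop :=
  (forall B, bounded ubX B ->
     bounded (group_ub Bor) (fun g => exists x, img (act g) B x /\ B x)) /\
  (forall (K : G -> Prop) (x : X), bounded (group_ub Bor) K ->
     bounded ubX (fun y => exists k, K k /\ y = act k x)).

End GroupDefs.

(* Coboundedness gives a bounded B0 with X = G.B0; choosing for every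
   x an element psi x with x in (psi x).B0 yields a candidate inverse
   psi : X -> G of the orbit map f g = g.x0.  *)

From Stdlib Require Import Classical ClassicalEpsilon.

Set Implicit Arguments.

Section GroupBornology.

Variable G : Group.
Variable Bor : (G -> Prop) -> Prop.
Hypothesis HBor : is_group_bornology G Bor.

(* Adjoining the identity, so that each coset g K' contains g. *)
Definition with_one (K : G -> Prop) : G -> Prop := setU K (fun k => k = gone G).

Definition coset_cover (K : G -> Prop) : (G -> Prop) -> Prop :=
  fun C => exists g, set_eq C (lcoset G g (with_one K)).

Lemma bor_point (g : G) : Bor (fun k => k = g).
Proof.
  destruct HBor as [Hcov [Hsub _]].
  destruct (Hcov g) as [D [HD Dg]].
  apply (Hsub _ D HD). intros k ->; exact Dg.
Qed.

Lemma bor_with_one (K : G -> Prop) : Bor K -> Bor (with_one K).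
Proof.
  intros HK. destruct HBor as [_ [_ [Hun _]]].
  apply Hun; [exact HK | apply bor_point].
Qed.

Lemma coset_cover_mem (K : G -> Prop) (g : G) : coset_cover K (lcoset G g (with_one K)).
Proof. exists g; intro; tauto. Qed.

Lemma lcoset_self (K : G -> Prop) (g : G) : lcoset G g (with_one K) g.
Proof. exists (gone G); split; [right; reflexivity | now rewrite gmul1r]. Qed.

Lemma lcoset_of_quotient (K : G -> Prop) (g h : G) :
  K (gmul G (ginv G g) h) -> lcoset G g (with_one K) h.
Proof.
  intros Hk. exists (gmul G (ginv G g) h); split; [left; exact Hk |].
  now rewrite gmulA, gmulVr, gmul1l.
Qed.

Lemma coset_cover_ub (K : G -> Prop) : Bor K -> group_ub G Bor (coset_cover K).
Proof.
  intros HK. split.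
  - intros g. exists (lcoset G g (with_one K)).
    split; [apply coset_cover_mem | apply lcoset_self].
  - exists (with_one K); split; [now apply bor_with_one |].
    intros C HC. exists C; split; [exact HC | intros x Hx; exact Hx].
Qed.

Lemma bor_bounded (B : G -> Prop) : Bor B -> bounded (group_ub G Bor) B.
Proof.
  intros HB. exists (coset_cover B); split; [now apply coset_cover_ub |].
  exists (lcoset G (gone G) (with_one B)); split; [apply coset_cover_mem |].
  intros b Hb. exists b; split; [left; exact Hb | now rewrite gmul1l].
Qed.

(* A bounded set lies in some g B with B in Bor, and {g} B is in Bor. *)
Lemma bounded_bor (A : G -> Prop) : bounded (group_ub G Bor) A -> Bor A.
Proof.
  intros [U [[_ [B [HB Href]]] [C [HC HAC]]]].
  destruct (Href C HC) as [D [[g Hg] HCD]].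
  destruct HBor as [_ [Hsub [_ [_ Hmul]]]].
  apply Hsub with (set_mul G (fun k => k = g) B).
  - apply Hmul; [apply bor_point | exact HB].
  - intros a Ha. apply HAC, HCD, Hg in Ha. destruct Ha as [b [Hb ->]].
    exists g, b; auto.
Qed.

End GroupBornology.

Arguments with_one {G} K _.
Arguments coset_cover {G} K _.

Section LargeScale.

Variable X : Type.
Variable ub : ((X -> Prop) -> Prop) -> Prop.

Lemma bounded_subset (A B : X -> Prop) : bounded ub A -> subset B A -> bounded ub B.
Proof.
  intros [U [HU [C [HC HAC]]]] HBA.
  exists U; split; [exact HU |]. exists C; split; [exact HC |].
  intros x Hx; auto.
Qed.

Hypothesis HLS : is_large_scale ub.

Lemma bounded_union (A B : X -> Prop) :
  bounded ub A -> bounded ub B -> bounded ub (setU A B).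
Proof. destruct HLS as [_ [_ [_ Hun]]]. apply Hun. Qed.

(* As soon as some set is bounded, a uniformly bounded cover exists and
   every point is bounded. *)
Lemma bounded_point (B : X -> Prop) (x : X) :
  bounded ub B -> bounded ub (fun y => y = x).
Proof.
  intros [W [HW _]]. destruct HLS as [Hcov _].
  destruct (Hcov W HW x) as [A [HA Ax]].
  exists W; split; [exact HW |]. exists A; split; [exact HA | intros y ->; exact Ax].
Qed.

(* st(D, V) is an element of the uniformly bounded cover st(U, V). *)
Lemma bounded_star (U V : (X -> Prop) -> Prop) (D : X -> Prop) :
  ub U -> ub V -> U D -> bounded ub (st_set D V).
Proof.
  intros HU HV HD. destruct HLS as [_ [Hst _]].
  exists (st_cover U V); split; [now apply Hst |].
  exists (st_set D V); split; [exists D; split; [exact HD | intro; tauto] |].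
  intros x Hx; exact Hx.
Qed.

End LargeScale.

Section OrbitMap.

Variable G : Group.
Variable Bor : (G -> Prop) -> Prop.
Variable X : Type.
Variable ubX : ((X -> Prop) -> Prop) -> Prop.
Variable act : G -> X -> X.

Hypothesis HBor : is_group_bornology G Bor.
Hypothesis HLS : is_large_scale ubX.
Hypothesis Hact : is_action G act.
Hypothesis Hunif : acts_by_uniform_coarse_equivalences G ubX act.
Hypothesis Hproper : proper_action G Bor ubX act.

Definition translates (W : (X -> Prop) -> Prop) : (X -> Prop) -> Prop :=
  fun C => exists g A, W A /\ set_eq C (img (act g) A).

Lemma translates_mem (W : (X -> Prop) -> Prop) (g : G) (A : X -> Prop) :
  W A -> translates W (img (act g) A).
Proof. intros HA. exists g, A; split; [exact HA | intro; tauto]. Qed.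

Lemma act_mul (g h : G) (x : X) : act (gmul G g h) x = act g (act h x).
Proof. destruct Hact as [_ Hmul]. apply Hmul. Qed.

Lemma act_inv_cancel (g : G) (x : X) : act (ginv G g) (act g x) = x.
Proof. destruct Hact as [Hone _]. now rewrite <- act_mul, gmulVl, Hone. Qed.

Lemma return_set_bor (B : X -> Prop) :
  bounded ubX B -> Bor (fun g => exists x, img (act g) B x /\ B x).
Proof.
  intros HB. apply (bounded_bor HBor). destruct Hproper as [Hret _]. now apply Hret.
Qed.

Lemma orbit_bounded (K : G -> Prop) (x : X) :
  Bor K -> bounded ubX (fun y => exists k, K k /\ y = act k x).
Proof.
  intros HK. destruct Hproper as [_ Horb]. apply Horb. now apply bor_bounded.
Qed.

Variable x0 : X.

(* {g | g.x0 in B} is contained in the return set of B u {x0}. *)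
Lemma orbit_map_coarse : coarse (group_ub G Bor) ubX (fun g => act g x0).
Proof.
  intros B HB. set (B' := setU B (fun y => y = x0)).
  assert (HB' : bounded ubX B') by (apply (bounded_union HLS); [exact HB | eapply bounded_point; eauto]).
  apply bor_bounded; [exact HBor |].
  destruct HBor as [_ [Hsub _]]. apply Hsub with (1 := return_set_bor HB').
  intros g Hg. exists (act g x0); split; [exists x0; split; [right |] | left]; auto.
Qed.

(* A subset of a coset g K is mapped into g.(K.x0), a translate of a bounded set. *)
Lemma orbit_map_ls_continuous : ls_continuous (group_ub G Bor) ubX (fun g => act g x0).
Proof.
  intros U [_ [K [HK Href]]].
  destruct (orbit_bounded x0 HK) as [W [HW [C [HC HKC]]]].
  exists (translates W); split; [now apply Hunif |].
  intros A' [A [HA Heq]]. destruct (Href A HA) as [D [[g Hg] HAD]].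
  exists (img (act g) C); split; [now apply translates_mem |].
  intros y Hy. apply Heq in Hy. destruct Hy as [a [Ha ->]].
  apply HAD, Hg in Ha. destruct Ha as [k [Hk ->]].
  exists (act k x0); split; [apply HKC; now exists k | apply act_mul].
Qed.

Variable B0 : X -> Prop.
Variable psi : X -> G.
Hypothesis HB0 : bounded ubX B0.
Hypothesis Hpsi : forall x, exists b, B0 b /\ x = act (psi x) b.

Let B1 : X -> Prop := setU B0 (fun y => y = x0).

Lemma bounded_B1 : bounded ubX B1.
Proof. apply (bounded_union HLS); [exact HB0 | eapply bounded_point; eauto]. Qed.

Lemma psi_translate_contains (C1 : X -> Prop) (x : X) :
  subset B1 C1 -> img (act (psi x)) C1 x /\ img (act (psi x)) C1 (act (psi x) x0).
Proof.
  intros HB1C1. destruct (Hpsi x) as [b [Hb Hxb]]. split.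
  - exists b; split; [apply HB1C1; left |]; assumption.
  - exists x0; split; [apply HB1C1; right |]; reflexivity.
Qed.

(* If psi x lies in B in Bor, then x lies in the star of (a set containing)
   B.x0 with respect to the translates of a cover containing B1. *)
Lemma psi_coarse : coarse ubX (group_ub G Bor) psi.
Proof.
  intros B HB. apply (bounded_bor HBor) in HB.
  destruct (orbit_bounded x0 HB) as [W [HW [D [HD HBD]]]].
  destruct bounded_B1 as [W1 [HW1 [C1 [HC1 HB1C1]]]].
  apply bounded_subset with (st_set D (translates W1)).
  - apply bounded_star with W; [exact HLS | exact HW | now apply Hunif | exact HD].
  - intros x Hx. destruct (psi_translate_contains x HB1C1) as [Hx1 Hx2].
    exists (img (act (psi x)) C1). split; [now apply translates_mem |].
    split; [| exact Hx1].
    exists (act (psi x) x0); split; [apply HBD; now exists (psi x) | exact Hx2].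
Qed.

(* For x, a in an element A of a uniformly bounded cover U, the element
   (psi a)^-1 psi x sends a point of B0 into the bounded set
   E = st(C0, translates U) (C0 containing B0), hence lies in a fixed
   return set P; so psi(A) lies in the coset psi a (P u {1}). *)
Lemma psi_ls_continuous : ls_continuous ubX (group_ub G Bor) psi.
Proof.
  intros U HU. destruct HB0 as [W0 [HW0 [C0 [HC0 HB0C0]]]].
  set (E := setU (st_set C0 (translates U)) B0).
  assert (HE : bounded ubX E).
  { apply (bounded_union HLS); [| exact HB0].
    apply bounded_star with W0; [exact HLS | exact HW0 | now apply Hunif | exact HC0]. }
  set (P := fun g => exists x, img (act g) E x /\ E x).
  exists (coset_cover P); split; [apply coset_cover_ub; [exact HBor | now apply return_set_bor] |].
  intros A' [A [HA Heq]].
  destruct (classic (exists a, A a)) as [[a Ha] | Hempty].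
  - exists (lcoset G (psi a) (with_one P)); split; [apply coset_cover_mem |].
    intros y Hy. apply Heq in Hy. destruct Hy as [x [Hx ->]].
    apply lcoset_of_quotient.
    destruct (Hpsi a) as [ba [Hba Hab]]. destruct (Hpsi x) as [bx [Hbx Hxb]].
    exists (act (ginv G (psi a)) x); split.
    + exists bx; split; [right; exact Hbx |]. now rewrite act_mul, <- Hxb.
    + left. exists (img (act (ginv G (psi a))) A).
      split; [now apply translates_mem |]. split.
      * exists ba; split; [now apply HB0C0 |].
        exists a; split; [exact Ha |]. now rewrite Hab at 2; rewrite act_inv_cancel.
      * now exists x.
  - exists (lcoset G (gone G) (with_one P)); split; [apply coset_cover_mem |].
    intros y Hy. apply Heq in Hy. destruct Hy as [x [Hx _]]. exfalso; eauto.
Qed.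

(* g^-1 psi(g.x0) sends a point of B0 to x0, so it lies in the return set of B1. *)
Lemma psi_orbit_close : close (group_ub G Bor) (fun g => psi (act g x0)) (fun g => g).
Proof.
  set (K := fun k => exists b, B0 b /\ act k b = x0).
  assert (HK : Bor K).
  { destruct HBor as [_ [Hsub _]]. apply Hsub with (1 := return_set_bor bounded_B1).
    intros k [b [Hb Hkb]]. exists x0; split; [exists b; split; [left |] | right]; auto. }
  exists (coset_cover K); split; [now apply coset_cover_ub |].
  intros g. exists (lcoset G g (with_one K)). split; [apply coset_cover_mem |].
  split; [exists g; split; [reflexivity | apply lcoset_self] |].
  apply lcoset_of_quotient. destruct (Hpsi (act g x0)) as [b [Hb Hgb]].
  exists b; split; [exact Hb |]. now rewrite act_mul, <- Hgb, act_inv_cancel.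
Qed.

Lemma orbit_psi_close : close ubX (fun x => act (psi x) x0) (fun x => x).
Proof.
  destruct bounded_B1 as [W1 [HW1 [C1 [HC1 HB1C1]]]].
  exists (translates W1); split; [now apply Hunif |].
  intros x. destruct (psi_translate_contains x HB1C1) as [Hx1 Hx2].
  exists (img (act (psi x)) C1); split; [now apply translates_mem |].
  split; [now exists x | exact Hx2].
Qed.

End OrbitMap.

Lemma cobounded_section (G : Group) (X : Type) (ubX : ((X -> Prop) -> Prop) -> Prop)
  (act : G -> X -> X) :
  cobounded_action G ubX act ->
  exists (B0 : X -> Prop) (psi : X -> G),
    bounded ubX B0 /\ forall x, exists b, B0 b /\ x = act (psi x) b.
Proof.
  intros [B0 [HB0 Hcob]].
  exists B0, (fun x => proj1_sig (constructive_indefinite_description _ (Hcob x))).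
  split; [exact HB0 |].
  intros x. exact (proj2_sig (constructive_indefinite_description _ (Hcob x))).
Qed.

Theorem theorem6p4 (G : Group) (Bor : (gcar G -> Prop) -> Prop) (X : Type)
  (ubX : ((X -> Prop) -> Prop) -> Prop) (act : gcar G -> X -> X) :
  @is_group_bornology G Bor ->
  is_large_scale ubX ->
  @is_action G X act ->
  @acts_by_uniform_coarse_equivalences G X ubX act ->
  @proper_action G X Bor ubX act ->
  @cobounded_action G X ubX act ->
  forall x0 : X, coarse_equivalence (@group_ub G Bor) ubX (fun g => act g x0).
Proof.
  intros HBor HLS Hact Hunif Hproper Hcob x0.
  destruct (cobounded_section Hcob) as [B0 [psi [HB0 Hpsi]]].
  split; [now apply orbit_map_coarse |].
  split; [now apply orbit_map_ls_continuous |].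
  exists psi. repeat split.
  - eapply psi_coarse; eassumption.
  - eapply psi_ls_continuous; eassumption.
  - eapply psi_orbit_close; eassumption.
  - eapply orbit_psi_close; eassumption.
Qed.
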